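(* Let $G$ be a connected bipartite graph with at least two vertices. A vertex $v\in V(G)$ is an $\mathcal{L}$-branch leaf of some BFS ordering of $G$ if and only if there is a vertex $r\in V(G)\setminus\{v\}$ such that $\mathrm{dist}_G(r,w)=\mathrm{dist}_{G-v}(r,w)$ for all $w\in V(G)\setminus\{v\}$.
   Context: Graphs are finite, simple, undirected; $\mathrm{dist}_H(a,b)$ is the number of edges of a shortest $a$-$b$ path in $H$. A vertex ordering of $G$ is a bijection $\sigma:\{1,\dots,n\}\to V(G)$; $u\prec_\sigma w$ means $u$ comes before $w$. BFS orderings are produced by the label search: initially all labels are $\emptyset$; for $i=1,\dots,n$ choose any unnumbered vertex $x$ such that there is no unnumbered $y$ with $\mathrm{label}(x)\prec\mathrm{label}(y)$, set $\sigma(i)=x$, and add $i$ to the labels of the unnumbered neighbors of $x$, where $A\prec B$ iff ($A=\emptyset$ and $B\neq\emptyset$) or $\min(A)>\min(B)$. The $\mathcal{L}$-tree of $\sigma$ is the spanning tree containing, for each $v\neq\sigma(1)$, the edge from $v$ to its rightmost neighbor $w$ with $w\prec_\sigma v$. A vertex $v\neq\sigma(1)$ that is a leaf of the $\mathcal{L}$-tree is an $\mathcal{L}$-branch leaf of $\sigma$. *)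

(* A graph is a symmetric irreflexive relation e on a finType T. *)
From mathcomp Require Import all_boot.
Set Implicit Arguments. Unset Strict Implicit. Unset Printing Implicit Defensive.

Section Graph.
Variables (T : finType) (e : rel T).

Definition connected_graph : Prop := forall x y : T, connect e x y.

Definition bipartite : Prop :=
  exists c : T -> bool, forall x y, e x y -> c x != c y.

(* A walk from a of length d ending at b, all of whose vertices satisfy P
   (i.e. a walk in the induced subgraph G[P]). *)
Definition walk_in (P : pred T) (a b : T) (d : nat) : Prop :=
  exists p : seq T, [&& path e a p, last a p == b, all P (a :: p) & size p == d].

(* is_dist P a b d  :<->  dist_{G[P]}(a,b) = d  (a finite value). *)
Definition is_dist (P : pred T) (a b : T) (d : nat) : Prop :=
  walk_in P a b d /\ forall k, walk_in P a b k -> d <= k.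

(* Vertex orderings: sigma(i+1) = nth s i (0-indexed positions). *)
Definition vertex_ordering (s : seq T) : Prop := uniq s /\ forall x, x \in s.

(* label of x just before step i (0-indexed): positions j < i of numbered
   neighbours of x. Positions are 0-indexed (shift by 1 is irrelevant). *)
Definition label (s : seq T) (i : nat) (x : T) : seq nat :=
  [seq j <- iota 0 i | e (nth x s j) x].

Definition seq_min (A : seq nat) : nat := foldr minn (head 0 A) A.

Definition lab_lt (A B : seq nat) : bool :=
  ((A == [::]) && (B != [::])) ||
  [&& A != [::], B != [::] & seq_min B < seq_min A].

Definition is_BFS (s : seq T) : Prop :=
  vertex_ordering s /\
  forall i, i < size s -> forall y, y \notin take i s ->
    ~~ lab_lt (label s i (nth y s i)) (label s i y).

Definition Lparent (s : seq T) (v w : T) : Prop :=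
  [/\ index w s < index v s, e v w &
      forall u, index u s < index v s -> e v u -> index u s <= index w s].

(* v is an L-branch leaf: v <> sigma(1) and v is a leaf of the L-tree,
   i.e. v is the L-parent of no vertex (its only tree edge is to its parent). *)
Definition L_branch_leaf (s : seq T) (v : T) : Prop :=
  index v s != 0 /\ ~ (exists u, Lparent s u v).

End Graph.

(* In a BFS ordering from r, let the level of x be its depth in the tree joining every
   vertex to its first-numbered neighbour: levels are the distances from r and they are
   nondecreasing along the ordering.  In a bipartite graph adjacent vertices lie on
   different levels, so the L-tree parent of x (its last earlier neighbour) lies one level
   above x, i.e. the L-tree is a shortest-path tree.  If v is a leaf of it, the L-tree
   paths from r avoid v, hence G - v keeps all distances from r.

   Conversely, fix a shortest r-v path P and run the label search from r breaking ties in
   favour of P: every vertex of P, v included, is then numbered first on its level.  If v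
   were the L-tree parent of some u, u would lie one level below v and, by hypothesis,
   would have a shortest r-u path avoiding v; its penultimate vertex is a neighbour of u on
   the level of v, so it is numbered after v, contradicting the choice of v as the last
   earlier neighbour of u. *)

From mathcomp Require Import all_boot zify.
From Stdlib Require Import Classical.
Set Implicit Arguments. Unset Strict Implicit. Unset Printing Implicit Defensive.

Lemma foldr_minn_le x0 A a : a \in x0 :: A -> foldr minn x0 A <= a.
Proof.
elim: A => [|b A IH] /=; first by rewrite mem_seq1 => /eqP ->.
rewrite !inE geq_min => /or3P [ax0 | /eqP -> | aA].
- by rewrite IH ?orbT // inE ax0.
- by rewrite leqnn.
- by rewrite IH ?orbT // inE aA orbT.
Qed.

Lemma foldr_minn_mem x0 A : foldr minn x0 A \in x0 :: A.
Proof.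
elim: A => [|b A IH] /=; first by rewrite mem_seq1.
rewrite /minn; case: ltnP => _; first by rewrite !inE eqxx orbT.
by move: IH; rewrite !inE => /orP [-> | ->]; rewrite ?orbT.
Qed.

Lemma seq_min_le A a : a \in A -> seq_min A <= a.
Proof. by case: A => [//|b A] aA; apply: foldr_minn_le; rewrite inE aA orbT. Qed.

Lemma seq_min_mem A : A != [::] -> seq_min A \in A.
Proof.
case: A => [//|b A] _; change (foldr minn b (b :: A) \in b :: A).
by have := foldr_minn_mem b (b :: A); rewrite inE => /orP [/eqP -> | //]; rewrite inE eqxx.
Qed.

Section Labels.
Variables (T : finType) (e : rel T).

Lemma mem_label s i x j : (j \in label e s i x) = (j < i) && e (nth x s j) x.
Proof. by rewrite /label mem_filter mem_iota add0n andbC. Qed.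

Lemma all_label_lt s i x : all (fun j => j < i) (label e s i x).
Proof. by apply/allP => j; rewrite mem_label => /andP []. Qed.

Lemma label_take s i x : label e (take i s) i x = label e s i x.
Proof. by apply: eq_in_filter => j; rewrite mem_iota add0n /= => ji; rewrite nth_take. Qed.

End Labels.

Section Walks.
Variables (T : finType) (e : rel T).

Lemma connect_cross_edge (A : pred T) x y :
  connect e x y -> A x -> ~~ A y -> exists a b, [/\ A a, ~~ A b & e a b].
Proof.
move=> /connectP [p]; elim: p x => [|z p IH] x /=; first by move=> _ -> ->.
move=> /andP [exz pz] yl Ax nAy; case Az: (A z); first exact: IH pz yl Az nAy.
by exists x, z; rewrite Az.
Qed.

Lemma walk_in0 (P : pred T) a : P a -> walk_in e P a a 0.
Proof. by move=> Pa; exists [::]; rewrite /= Pa eqxx. Qed.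

Lemma walk_in_rcons (P : pred T) a b c k :
  walk_in e P a b k -> e b c -> P c -> walk_in e P a c k.+1.
Proof.
case=> p /and4P [pp /eqP pb pa /eqP pk] ebc Pc; exists (rcons p c).
by rewrite rcons_path pp pb ebc last_rcons size_rcons pk -cats1 -cat_cons all_cat pa /= Pc !eqxx.
Qed.

Lemma walk_in_last_edge (P : pred T) a c k :
  walk_in e P a c k.+1 -> exists2 b, walk_in e P a b k & e b c.
Proof.
case=> q; case/lastP: q => [|p b] /and4P []; rewrite ?rcons_path ?last_rcons ?size_rcons //.
move=> /andP [pp ebc] /eqP <- pa; rewrite eqSS => pk; exists (last a p) => //; exists p.
by rewrite pp eqxx pk; move: pa; rewrite -cats1 -cat_cons all_cat => /andP [-> _].
Qed.

Lemma walk_in_end (P : pred T) a b k : walk_in e P a b k -> P b.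
Proof. by case=> p /and4P [_ /eqP <- /allP pa _]; apply: pa; rewrite mem_last. Qed.

Lemma is_dist_unique (P : pred T) a b d d' :
  is_dist e P a b d -> is_dist e P a b d' -> d = d'.
Proof. by move=> [w1 m1] [w2 m2]; apply/eqP; rewrite eqn_leq m1 // m2. Qed.

Lemma walk_in_is_dist (P : pred T) a b k :
  walk_in e P a b k -> exists d, is_dist e P a b d.
Proof.
elim/ltn_ind: k => k IH wk.
case: (classic (exists2 k', k' < k & walk_in e P a b k')) => [[k' lt w] | no].
  exact: IH lt w.
exists k; split => // k' w; rewrite leqNgt; apply/negP => lt; by apply: no; exists k'.
Qed.

End Walks.

(* [s] breaks the ties of the label search in favour of [P]: a vertex outside [P] is
   numbered while a vertex of [P] is waiting only if its label is strictly better. *)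
Definition bfs_favours (T : finType) (e : rel T) (P : seq T) (s : seq T) : Prop :=
  forall x y z, x \notin P -> y \in P -> index x s < index y s ->
    index z s < index x s -> e z y -> exists2 z', index z' s < index z s & e z' x.

Section BFSOrdering.
Variables (T : finType) (e : rel T).
Hypotheses (e_sym : symmetric e) (e_irr : irreflexive e) (e_conn : connected_graph e).
Variables (s : seq T) (r : T).
Hypotheses (s_BFS : is_BFS e s) (index_root : index r s = 0).

Lemma mem_bfs x : x \in s. Proof. by case: s_BFS => [[]]. Qed.

Lemma bfs_uniq : uniq s. Proof. by case: s_BFS => [[]]. Qed.

Lemma size_bfs : size s = #|T|.
Proof. by move/card_uniqP: bfs_uniq => <-; apply: eq_card => x; rewrite mem_bfs. Qed.

Lemma index_bfs_lt x : index x s < #|T|.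
Proof. by rewrite -size_bfs index_mem mem_bfs. Qed.

Lemma index_bfs_inj x y : index x s = index y s -> x = y.
Proof. by move=> h; rewrite -(nth_index x (mem_bfs x)) h nth_index ?mem_bfs. Qed.

Lemma index_bfs_nth0 x : index (nth x s 0) s = 0.
Proof. by rewrite index_uniq ?bfs_uniq // size_bfs (leq_ltn_trans _ (index_bfs_lt x)). Qed.

Lemma index_bfs_eq0 x : (index x s == 0) = (x == r).
Proof. by apply/eqP/eqP => [h | ->] //; apply: index_bfs_inj; rewrite h. Qed.

Lemma index_bfs_gt0 x : (0 < index x s) = (x != r).
Proof. by rewrite lt0n index_bfs_eq0. Qed.

Lemma bfs_label_choice x y : index x s <= index y s ->
  ~~ lab_lt (label e s (index x s) x) (label e s (index x s) y).
Proof.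
move=> le; case: s_BFS => _ /(_ (index x s)); rewrite index_mem mem_bfs => /(_ isT y).
by rewrite nth_index ?mem_bfs //; apply; rewrite in_take ?mem_bfs // -leqNgt.
Qed.

Definition parent (x : T) : T := nth x s (seq_min (label e s (index x s) x)).

Lemma label_bfs_nonnil x : x != r -> label e s (index x s) x != [::].
Proof.
move=> xr; pose A := [pred z | z \in take (index x s) s].
have Ar : A r by rewrite inE in_take ?mem_bfs // index_root index_bfs_gt0.
have Ax : ~~ A x by rewrite inE in_take ?mem_bfs // ltnn.
have [a [b [Aa Ab eab]]] := connect_cross_edge (e_conn r x) Ar Ax.
rewrite inE in_take ?mem_bfs // in Aa; rewrite inE in_take ?mem_bfs // -leqNgt in Ab.
have lb : label e s (index x s) b != [::].
  have : index a s \in label e s (index x s) b by rewrite mem_label nth_index ?mem_bfs ?Aa.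
  by apply: contraTneq => ->.
move/bfs_label_choice: Ab.
by apply: contraNneq => lx; rewrite /lab_lt lx eqxx lb.
Qed.

Lemma parentP x : x != r ->
  [/\ index (parent x) s = seq_min (label e s (index x s) x),
      index (parent x) s < index x s & e (parent x) x].
Proof.
move=> xr; have := seq_min_mem (label_bfs_nonnil xr); rewrite mem_label => /andP [lt ex].
have idx : index (parent x) s = seq_min (label e s (index x s) x).
  by rewrite index_uniq ?bfs_uniq // size_bfs (ltn_trans lt) ?index_bfs_lt.
by rewrite idx.
Qed.

Lemma parent_first x y : index y s < index x s -> e y x -> index (parent x) s <= index y s.
Proof.
move=> lt eyx; have xr : x != r by rewrite -index_bfs_gt0 (leq_ltn_trans _ lt).
by have [-> _ _] := parentP xr; apply: seq_min_le; rewrite mem_label lt nth_index ?mem_bfs.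
Qed.

Lemma index_parent_mono x y : x != r -> index x s <= index y s ->
  index (parent x) s <= index (parent y) s.
Proof.
move=> xr le; have yr : y != r by rewrite -index_bfs_gt0 (leq_trans _ le) ?index_bfs_gt0.
have [px ltx _] := parentP xr; have [_ _ ey] := parentP yr.
case: (ltnP (index (parent y) s) (index x s)) => [pyx | ]; last exact: leq_trans (ltnW ltx).
have py : index (parent y) s \in label e s (index x s) y.
  by rewrite mem_label pyx nth_index ?mem_bfs.
have := bfs_label_choice le; rewrite /lab_lt (negbTE (label_bfs_nonnil xr)) /=.
have -> /= : label e s (index x s) y != [::] by apply: contraTneq py => ->.
by rewrite -leqNgt px => /leq_trans; apply; apply: seq_min_le.
Qed.

(* Parents have smaller indices, so the fuel [#|T|] of [level] is never exhausted. *)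
Fixpoint depth (fuel : nat) (x : T) : nat :=
  if fuel is f.+1 then (if x == r then 0 else (depth f (parent x)).+1) else 0.

Definition level (x : T) : nat := depth #|T| x.

Lemma depth_fuel f g x : index x s < f -> index x s < g -> depth f x = depth g x.
Proof.
elim: f g x => [|f IH] [|g] x //= ltf ltg.
case: eqP => // /eqP xr; have [_ lt _] := parentP xr.
by congr _.+1; apply: IH; lia.
Qed.

Lemma level_root : level r = 0.
Proof. by rewrite /level; case: #|T| => //= n; rewrite eqxx. Qed.

Lemma level_parent x : x != r -> level x = (level (parent x)).+1.
Proof.
move=> xr; have [_ lt _] := parentP xr; have := index_bfs_lt x; rewrite /level.
case: #|T| => // n ltn; rewrite [depth n.+1 x]/= (negbTE xr).
by congr _.+1; apply: depth_fuel; lia.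
Qed.

Lemma level_eq0 x : (level x == 0) = (x == r).
Proof. by case: (eqVneq x r) => [-> | xr]; [rewrite level_root | rewrite level_parent]. Qed.

Lemma level_mono x y : index x s <= index y s -> level x <= level y.
Proof.
have [k] := ubnP (index y s); elim: k x y => [|k IH] x y // yk le.
case: (eqVneq x r) => [-> | xr]; first by rewrite level_root.
have yr : y != r by rewrite -index_bfs_gt0 (leq_trans _ le) ?index_bfs_gt0.
have [_ lt _] := parentP yr.
by rewrite (level_parent xr) (level_parent yr) ltnS IH ?index_parent_mono //; lia.
Qed.

Lemma level_lt_index x y : level x < level y -> index x s < index y s.
Proof. by rewrite !ltnNge; apply: contra; apply: level_mono. Qed.

Lemma level_edge x y : e x y -> level y <= (level x).+1.
Proof.
move=> exy; case: (ltngtP (index x s) (index y s)) => [lt | lt | /index_bfs_inj xy].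
- have yr : y != r by rewrite -index_bfs_gt0 (leq_ltn_trans _ lt).
  by rewrite (level_parent yr) ltnS level_mono // parent_first.
- by rewrite (leq_trans _ (leqnSn _)) // level_mono // ltnW.
- by rewrite xy e_irr in exy.
Qed.

Lemma level_path a p : path e a p -> level (last a p) <= level a + size p.
Proof.
elim: p a => [|b p IH] a /=; first by rewrite addn0.
case/andP => eab pp; apply: leq_trans (IH _ pp) _.
by rewrite addnS -addSn leq_add2r level_edge.
Qed.

Lemma level_walk (P : pred T) w k : walk_in e P r w k -> level w <= k.
Proof. by case=> p /and4P [pp /eqP <- _ /eqP <-]; have := level_path pp; rewrite level_root. Qed.

Lemma walk_in_level (P : pred T) :
  P r -> (forall x, x != r -> exists y, [/\ e y x, (level y).+1 = level x & P y]) ->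
  forall w, P w -> walk_in e P r w (level w).
Proof.
move=> Pr step; suff walk k w : level w = k -> P w -> walk_in e P r w k.
  by move=> w; apply: walk.
elim: k w => [|k IH] w lw Pw.
  by move/eqP: lw; rewrite level_eq0 => /eqP ->; apply: walk_in0.
have wr : w != r by rewrite -level_eq0 lw.
have [y [eyw ly Py]] := step w wr.
by apply: walk_in_rcons eyw Pw; apply: IH Py; apply: succn_inj; rewrite ly.
Qed.

Lemma is_dist_level w : is_dist e predT r w (level w).
Proof.
split; last by move=> k; apply: level_walk.
apply: walk_in_level => // x xr; exists (parent x).
by have [_ _ epx] := parentP xr; rewrite -level_parent.
Qed.

Lemma is_dist_restrictP (P : pred T) w :
  (forall d, is_dist e predT r w d <-> is_dist e P r w d) <-> walk_in e P r w (level w).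
Proof.
split=> [dist | wk d]; first by case: ((dist _).1 (is_dist_level w)).
have distP : is_dist e P r w (level w) by split=> // k; apply: level_walk.
split=> hd; first by rewrite (is_dist_unique hd (is_dist_level w)).
by rewrite (is_dist_unique hd distP); apply: is_dist_level.
Qed.

Lemma Lparent_exists x : x != r -> exists y, Lparent e s x y.
Proof.
move=> xr; have [_ lt ex] := parentP xr.
pose earlier y := (index y s < index x s) && e x y.
have ep : earlier (parent x) by rewrite /earlier lt e_sym.
case: (arg_maxnP (fun y => index y s) ep) => y /andP [iy exy] ymax.
by exists y; split=> // u iu exu; apply: ymax; rewrite /earlier iu.
Qed.

Lemma tight_path_level a p : path e a p -> level (last a p) = level a + size p ->
  forall k, k <= size p -> level (nth a (a :: p) k) = level a + k.
Proof.
elim: p a => [|b p IH] a /=; first by move=> _ _ k; rewrite leqn0 => /eqP ->; rewrite addn0.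
case/andP=> eab pp tight; have := level_path pp; have := level_edge eab.
move=> lb lp; have lab : level b = (level a).+1 by lia.
case=> [|k] kp; first by rewrite addn0.
by rewrite /= (set_nth_default b) // (IH b pp) ?lab ?addSnnS //; lia.
Qed.

Lemma shortest_path_first_in_layer p :
  path e r p -> level (last r p) = size p -> bfs_favours e (r :: p) s ->
  forall k, k <= size p -> forall x, level x = k -> index (nth r (r :: p) k) s <= index x s.
Proof.
move=> pp lp fav; have lvl k : k <= size p -> level (nth r (r :: p) k) = k.
  by move=> kp; rewrite (tight_path_level pp) ?level_root.
elim=> [|k IH] kp x lx; first by rewrite /= index_root.
set y := nth r (r :: p) k.+1; set z := nth r (r :: p) k.
rewrite leqNgt; apply/negP => xy.
have zy : e z y by move/pathP: pp; apply.
have zx : index z s < index x s by apply: level_lt_index; rewrite lvl ?lx // ltnW.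
have xr : x != r by rewrite -level_eq0 lx.
have zpx : index z s <= index (parent x) s.
  by apply: IH (ltnW kp) _ _; apply: succn_inj; rewrite -level_parent.
have xP : x \in r :: p.
  apply/negPn/negP => xnP; have yP : y \in r :: p by rewrite mem_nth.
  have [z' z'z ez'x] := fav x y z xnP yP xy zx zy.
  by have := parent_first (ltn_trans z'z zx) ez'x; lia.
have := lvl (index x (r :: p)); rewrite -ltnS index_mem xP nth_index // lx => /(_ isT) ix.
by move: xy; rewrite /y ix nth_index // ltnn.
Qed.

Hypothesis e_bip : bipartite e.

Lemma level_edge_neq x y : e x y -> level x != level y.
Proof.
case: e_bip => c hc.
have col k z : level z = k -> c z = c r (+) odd k.
  elim: k z => [|k IH] z lz.
    by move/eqP: lz; rewrite level_eq0 => /eqP ->; rewrite addbF.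
  have zr : z != r by rewrite -level_eq0 lz.
  have [_ _ epz] := parentP zr; have := hc _ _ epz.
  rewrite (IH (parent z)); last by apply: succn_inj; rewrite -level_parent.
  by rewrite /=; case: (c z); case: (c r); case: (odd k).
move=> exy; apply: contra_neq (hc _ _ exy) => lxy.
by rewrite (col _ x erefl) (col _ y erefl) lxy.
Qed.

Lemma level_edge_succ x y : e x y -> index x s < index y s -> level y = (level x).+1.
Proof.
move=> exy lt; have := level_edge exy; have := level_mono (ltnW lt).
by have := level_edge_neq exy; lia.
Qed.

Lemma bfs_leaf_dist_preserved v : L_branch_leaf e s v ->
  r != v /\ forall w, w != v -> forall d, is_dist e predT r w d <-> is_dist e (predC1 v) r w d.
Proof.
case=> iv0 leaf; have rv : r != v by rewrite eq_sym -index_bfs_eq0.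
split=> // w wv; apply/is_dist_restrictP; move: w wv.
apply: walk_in_level => // x xr; have [y ly] := Lparent_exists xr; case: (ly) => lt exy _.
exists y; split; first by rewrite e_sym.
  by rewrite (level_edge_succ _ lt) // e_sym.
by apply/eqP => yv; apply: leaf; exists x; rewrite -yv.
Qed.

Lemma first_in_layer_leaf v : v != r ->
  (forall x, level x = level v -> index v s <= index x s) ->
  (forall u, u != v -> forall d, is_dist e predT r u d <-> is_dist e (predC1 v) r u d) ->
  L_branch_leaf e s v.
Proof.
move=> vr first dist_r; split; first by rewrite index_bfs_eq0.
case=> u [lt euv umax].
have luv : level u = (level v).+1 by rewrite (level_edge_succ _ lt) // e_sym.
have uv : u != v by apply: contraTneq euv => ->; rewrite e_irr.
have [y wy eyu] : exists2 y, walk_in e (predC1 v) r y (level v) & e y u.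
  by apply: walk_in_last_edge; rewrite -luv; apply/is_dist_restrictP/dist_r.
have yv : y != v := walk_in_end wy.
have ly : level y = level v.
  by apply/eqP; rewrite eqn_leq (level_walk wy) -ltnS -luv level_edge.
have vy : index v s < index y s.
  by rewrite ltn_neqAle first // andbT; apply: contra_neq yv => /index_bfs_inj ->.
have yu : index y s < index u s by apply: level_lt_index; rewrite ly luv.
by have := umax y yu; rewrite e_sym eyu leqNgt vy => /(_ isT).
Qed.

End BFSOrdering.

Definition label_key (m : nat) (A : seq nat) : nat := if A is [::] then m else seq_min A.

Lemma lab_lt_label_key m A B : all (fun j => j < m) A -> all (fun j => j < m) B ->
  lab_lt A B = (label_key m B < label_key m A).
Proof.
case: A => [|a A]; case: B => [|b B] hA hB.
- by rewrite /= ltnn.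
- by have := seq_min_mem (A := b :: B) isT => /(allP hB) /= ->.
- by have := seq_min_mem (A := a :: A) isT => /(allP hA) /= h; rewrite ltnNge ltnW.
- by rewrite /lab_lt /label_key; case: (seq_min _ < _).
Qed.

Section GreedyBFS.
Variables (T : finType) (e : rel T) (r : T) (P : seq T).

(* Lexicographic: the label order first, then membership in [P]. *)
Definition greedy_cost (pre : seq T) (x : T) : nat :=
  2 * label_key (size pre) (label e pre (size pre) x) + (x \notin P).

Definition greedy_next (pre : seq T) : T :=
  if [pick x | x \notin pre] is Some x0
  then [arg min_(x < x0 | x \notin pre) greedy_cost pre x] else r.

Fixpoint greedy_prefix (k : nat) : seq T :=
  if k is k'.+1 then rcons (greedy_prefix k') (greedy_next (greedy_prefix k')) else [:: r].

Definition greedy_bfs : seq T := greedy_prefix #|T|.-1.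

Local Notation s := greedy_bfs.

Lemma greedy_nextP pre y : y \notin pre ->
  greedy_next pre \notin pre /\
  forall z, z \notin pre -> greedy_cost pre (greedy_next pre) <= greedy_cost pre z.
Proof.
move=> ypre; rewrite /greedy_next; case: pickP => [x0 x0pre | /(_ y)]; last by rewrite ypre.
by case: arg_minnP.
Qed.

Lemma size_greedy_prefix k : size (greedy_prefix k) = k.+1.
Proof. by elim: k => //= k IH; rewrite size_rcons IH. Qed.

Lemma take_greedy_prefix k m : k <= m -> take k.+1 (greedy_prefix m) = greedy_prefix k.
Proof.
elim: m => [|m IH]; first by rewrite leqn0 => /eqP ->.
rewrite leq_eqVlt => /orP [/eqP -> | lt]; first by rewrite take_oversize // size_greedy_prefix.
by rewrite /= -cats1 takel_cat ?size_greedy_prefix // IH.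
Qed.

Lemma greedy_prefix_uniq k : k < #|T| -> uniq (greedy_prefix k).
Proof.
elim: k => [|k IH] lt //=; rewrite rcons_uniq (IH (ltnW lt)) andbT.
case: (pickP (fun y => y \notin greedy_prefix k)) => [y yk | full].
  by case: (greedy_nextP yk).
suff : #|T| <= size (greedy_prefix k) by rewrite size_greedy_prefix leqNgt lt.
by rewrite cardT uniq_leq_size ?enum_uniq // => x _; move/negbFE: (full x).
Qed.

Lemma card_gt0_root : 0 < #|T|. Proof. by apply/card_gt0P; exists r. Qed.

Lemma greedy_bfs_uniq : uniq s.
Proof. by apply: greedy_prefix_uniq; rewrite prednK ?card_gt0_root. Qed.

Lemma mem_greedy_bfs x : x \in s.
Proof.
apply/negPn/negP => xs; have uxs : uniq (x :: s) by rewrite /= xs greedy_bfs_uniq.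
have := max_card (mem (x :: s)); rewrite (card_uniqP uxs) /= size_greedy_prefix.
by rewrite prednK ?card_gt0_root // ltnn.
Qed.

Lemma index_greedy_root : index r s = 0.
Proof.
by rewrite /s -[greedy_prefix _](cat_take_drop 1) take_greedy_prefix //= eqxx.
Qed.

Lemma nth_greedy_bfs i : 0 < i < #|T| -> nth r s i = greedy_next (take i s).
Proof.
case: i => // j /andP [_ lt]; have jN : j < #|T|.-1 by rewrite -ltnS prednK ?card_gt0_root.
rewrite /s -(nth_take r (ltnSn j.+1)) !take_greedy_prefix ?(ltnW jN) //= nth_rcons.
by rewrite size_greedy_prefix ltnn eqxx.
Qed.

Lemma size_greedy_bfs : size s = #|T|.
Proof. by rewrite size_greedy_prefix prednK ?card_gt0_root. Qed.

Lemma index_greedy_lt x : index x s < #|T|.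
Proof. by rewrite -size_greedy_bfs index_mem mem_greedy_bfs. Qed.

Lemma greedy_bfs_min x y : x != r -> index x s <= index y s ->
  2 * label_key (index x s) (label e s (index x s) x) + (x \notin P) <=
  2 * label_key (index x s) (label e s (index x s) y) + (y \notin P).
Proof.
move=> xr le; set i := index x s.
have lti : i < #|T| := index_greedy_lt x.
have i0 : 0 < i.
  rewrite lt0n; apply: contra_neq xr => i0.
  by rewrite -(nth_index r (mem_greedy_bfs x)) -/i i0 -index_greedy_root nth_index ?mem_greedy_bfs.
have ypre : y \notin take i s by rewrite in_take ?mem_greedy_bfs // -leqNgt.
have [_ /(_ y ypre)] := greedy_nextP ypre.
rewrite -nth_greedy_bfs ?i0 ?lti // nth_index ?mem_greedy_bfs // /greedy_cost.
by rewrite size_takel ?label_take // size_greedy_bfs ltnW.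
Qed.

Lemma greedy_bfs_BFS : is_BFS e s.
Proof.
split; first by split; [exact: greedy_bfs_uniq | exact: mem_greedy_bfs].
move=> i lti y yi; set x := nth y s i.
have ix : index x s = i by rewrite index_uniq ?greedy_bfs_uniq.
case: (eqVneq x r) => [xr | xr].
  by move: ix; rewrite xr index_greedy_root => <-.
have le : index x s <= index y s by move: yi; rewrite in_take ?mem_greedy_bfs // -leqNgt ix.
rewrite -ix (lab_lt_label_key (m := index x s)) ?all_label_lt // -leqNgt.
by have := greedy_bfs_min xr le; case: (x \notin P); case: (y \notin P) => /=; lia.
Qed.

Lemma greedy_bfs_favours : bfs_favours e P s.
Proof.
move=> x y z xP yP xy zx ezy.
have xr : x != r by apply: contraTneq zx => ->; rewrite index_greedy_root.
have := greedy_bfs_min xr (ltnW xy); rewrite xP yP /= addn0.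
have zl : index z s \in label e s (index x s) y.
  by rewrite mem_label zx nth_index ?mem_greedy_bfs.
have ky : label_key (index x s) (label e s (index x s) y) <= index z s.
  by case: (label _ _ _ y) zl => // j A; apply: seq_min_le.
case lx : (label e s (index x s) x) => [|j A] /= kx; first by exfalso; lia.
have := seq_min_mem (A := j :: A) isT; rewrite -{2}lx mem_label => /andP [lt ex].
exists (nth x s (seq_min (j :: A))) => //.
by rewrite index_uniq ?greedy_bfs_uniq ?size_greedy_bfs ?(ltn_trans lt (index_greedy_lt x)) //; lia.
Qed.

End GreedyBFS.

Lemma dist_preserved_bfs_leaf (T : finType) (e : rel T) (r v : T) :
  symmetric e -> irreflexive e -> connected_graph e -> bipartite e -> r != v ->
  (forall w, w != v -> forall d, is_dist e predT r w d <-> is_dist e (predC1 v) r w d) ->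
  exists s, is_BFS e s /\ L_branch_leaf e s v.
Proof.
move=> e_sym e_irr e_conn e_bip rv dist_r.
have [D distD] : exists D, is_dist e predT r v D.
  case/connectP: (e_conn r v) => p pp pv; apply: (@walk_in_is_dist _ _ _ _ _ (size p)).
  by exists p; rewrite pp pv all_predT !eqxx.
have [[p /and4P [pp /eqP pv _ /eqP pD]] _] := distD.
set s := greedy_bfs e r (r :: p).
have s_BFS : is_BFS e s := greedy_bfs_BFS e r (r :: p).
have s0 : index r s = 0 := index_greedy_root e r (r :: p).
have lv : level e s r v = size p.
  by rewrite pD; apply: is_dist_unique (is_dist_level e_irr e_conn s_BFS s0 v) distD.
exists s; split=> //; apply: (first_in_layer_leaf e_sym e_irr e_conn s_BFS s0 e_bip).
- by rewrite eq_sym.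
- move=> x lx; rewrite -pv; have /= <- := nth_last r (r :: p).
  apply: (shortest_path_first_in_layer e_irr e_conn s_BFS s0 pp) => //.
  + by rewrite pv.
  + exact: greedy_bfs_favours.
  + by rewrite lx.
- exact: dist_r.
Qed.

Theorem theorem7 (T : finType) (e : rel T) (e_sym : symmetric e)
  (e_irr : irreflexive e) (e_conn : connected_graph e) (e_bip : bipartite e)
  (two : 1 < #|T|) (v : T) :
  (exists s : seq T, is_BFS e s /\ L_branch_leaf e s v) <->
  (exists r : T, r != v /\
     forall w : T, w != v ->
       forall d : nat, is_dist e predT r w d <-> is_dist e (predC1 v) r w d).
Proof.
split=> [[s [s_BFS leaf]] | [r [rv dist_r]]].
  exists (nth v s 0).
  exact (bfs_leaf_dist_preserved e_sym e_irr e_conn s_BFS (index_bfs_nth0 s_BFS v) e_bip leaf).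
exact: dist_preserved_bfs_leaf e_sym e_irr e_conn e_bip rv dist_r.
Qed.
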